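(* Let $\phi\colon P(\mathbb{R})\to P(\mathbb{R})$ be a surjective isometry with respect to the Kuiper distance, and let $f\colon\mathbb{R}\to\mathbb{R}$ be a bijection such that $\phi(\mu)(\{f(x)\})=\mu(\{x\})$ for all $\mu\in P(\mathbb{R})$ and $x\in\mathbb{R}$ (equivalently, $\phi(\delta_x)=\delta_{f(x)}$ for all $x$). Then $f$ is a homeomorphism of $\mathbb{R}$ (i.e. a monotone bijection).
   Context: $P(\mathbb{R})$ is the set of Borel probability measures on $\mathbb{R}$, with the Kuiper distance $d_{Ku}(\mu,\nu)=\sup\{|\mu(I)-\nu(I)| : I\text{ a non-degenerate interval of }\mathbb{R}\}$. $\delta_x$ denotes the Dirac measure at $x$. *)

From HB Require Import structures.
From mathcomp Require Import all_boot all_order all_algebra.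
From mathcomp Require Import all_classical all_reals all_analysis.
Set Implicit Arguments. Unset Strict Implicit. Unset Printing Implicit Defensive.
Import Order.TTheory GRing.Theory Num.Theory.
Import numFieldNormedType.Exports.
Local Open Scope classical_set_scope.
Local Open Scope ring_scope.

Definition nondeg_interval (R : realType) (I : set R) : Prop :=
  exists i : interval R, I = [set` i] /\ exists x y : R, x \in i /\ y \in i /\ x < y.

Definition kuiper (R : realType) (mu nu : probability R R) : \bar R :=
  ereal_sup [set `|(mu I - nu I)%E|%E | I in nondeg_interval (R:=R)].

From HB Require Import structures.
From mathcomp Require Import all_boot all_order all_algebra.
From mathcomp Require Import all_classical all_reals all_analysis.
From mathcomp Require Import ring lra.
Import Order.TTheory GRing.Theory Num.Theory.
Import numFieldNormedType.Exports.
Local Open Scope classical_set_scope.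
Local Open Scope ring_scope.

(* For distinct points, the Kuiper distance between the two-point measures
   (δ_a + δ_b)/2 and (δ_c + δ_d)/2 is 1 when the pairs {a, b} and {c, d} do
   not interlace and at most 1/2 when they do.  Since phi sends these measures
   to the two-point measures at the images under f, both f and its inverse
   preserve interlacing.  For such a bijection g, x < y < z forces g y between
   g x and g z: otherwise g would map (-oo, x) and (z, +oo), decreasingly, onto
   the two sides of a cut of ]g x, g z[ with no largest element on the left and
   no smallest on the right, which completeness of R forbids.  Hence g is
   strictly monotone, and a strictly monotone bijection of R is continuous. *)

Section interlacing.
Context {R : realType}.
Implicit Types (a b c d x y z : R) (g h : R -> R).

Definition strictly_between a b c : Prop := (a < c /\ c < b) \/ (b < c /\ c < a).

Definition interlaced a b c d : Prop :=
  (strictly_between a b c \/ strictly_between a b d) /\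
  (strictly_between c d a \/ strictly_between c d b).

Definition interlacing_preserving g : Prop :=
  forall a b c d, interlaced a b c d <-> interlaced (g a) (g b) (g c) (g d).

Lemma interlaced_uniq a b c d : interlaced a b c d -> uniq [:: a; b; c; d].
Proof.
move=> il; rewrite /= !inE !negb_or; repeat (apply/andP; split) => //;
  apply/eqP => e; subst; move: il; rewrite /interlaced /strictly_between; lra.
Qed.

Lemma interlacing_preservingN {g} :
  interlacing_preserving g -> interlacing_preserving (- g).
Proof.
move=> gi a b c d; rewrite gi /interlaced /strictly_between !fctE.
split; lra.
Qed.

Lemma interlacing_preserving_can {g h} :
  cancel h g -> interlacing_preserving g -> interlacing_preserving h.
Proof. by move=> hK gi a b c d; rewrite (gi (h a)) !hK. Qed.

Lemma strictly_between_in_itv {i : interval R} {x y z} :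
  x \in i -> y \in i -> strictly_between x y z -> z \in i.
Proof.
move=> xi yi [[xz zy]|[yz zx]].
- by apply: (interval_is_interval xi yi); rewrite (ltW xz) (ltW zy).
- by apply: (interval_is_interval yi xi); rewrite (ltW yz) (ltW zx).
Qed.

End interlacing.

Lemma no_open_cut {R : realType} (L U : set R) :
  L !=set0 -> U !=set0 -> (forall l u, L l -> U u -> l < u) ->
  (forall l u v, L l -> U u -> l <= v -> v <= u -> L v \/ U v) ->
  (forall l, L l -> exists2 l', L l' & l < l') ->
  (forall u, U u -> exists2 u', U u' & u' < u) -> False.
Proof.
move=> [l0 Ll0] [u0 Uu0] LU cover Lmax Umin.
have sup_le u : U u -> sup L <= u.
  by move=> Uu; apply: ge_sup; [exists l0 | move=> l Ll; exact/ltW/LU].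
have le_sup l : L l -> l <= sup L.
  by move=> Ll; apply: ub_le_sup => //; exists u0 => l' Ll'; exact/ltW/LU.
have [Ls|Us] := cover _ _ (sup L) Ll0 Uu0 (le_sup _ Ll0) (sup_le _ Uu0).
- by have [l Ll] := Lmax _ Ls; have := le_sup _ Ll; lra.
- by have [u Uu] := Umin _ Us; have := sup_le _ Uu; lra.
Qed.

Section interlacing_preserving_bijection.
Context {R : realType} {g h : R -> R}.
Hypotheses (gK : cancel g h) (hK : cancel h g) (gi : interlacing_preserving g).

Section middle_point_outside.
Variables x y z : R.
Hypotheses (xy : x < y) (yz : y < z) (gxz : g x < g z).
Hypothesis gy_out : g y < g x \/ g z < g y.

(* lra does not use section hypotheses, so they are passed explicitly. *)
Local Ltac interlacing_lra :=
  move: (xy) (yz) (gxz) (gy_out); rewrite /interlaced /strictly_between; lra.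

Let outer_inside w : w < x \/ z < w -> g x < g w /\ g w < g z.
Proof.
move=> w_out; have /gi : interlaced x z y w by interlacing_lra.
by interlacing_lra.
Qed.

Let inner_outside t : x <= t -> t <= z -> ~ (g x < g t /\ g t < g z).
Proof.
move=> xt tz gt_in.
have /(gi x z y t) : interlaced (g x) (g z) (g y) (g t) by interlacing_lra.
by interlacing_lra.
Qed.

Let left_lt_right u w : u < x -> z < w -> g u < g w.
Proof.
move=> ux zw; have /gi : interlaced x w z u by interlacing_lra.
have := outer_inside u (or_introl ux); have := outer_inside w (or_intror zw).
by interlacing_lra.
Qed.

Let left_decreasing u u' : u < u' -> u' < x -> g u' < g u.
Proof.
move=> uu' u'x; have /gi : interlaced u' z x u by interlacing_lra.
have := outer_inside u (or_introl (lt_trans uu' u'x)).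
have := outer_inside u' (or_introl u'x).
by interlacing_lra.
Qed.

Let right_decreasing w w' : z < w -> w < w' -> g w' < g w.
Proof.
move=> zw ww'; have /gi : interlaced x w z w' by interlacing_lra.
have := outer_inside w (or_intror zw).
have := outer_inside w' (or_intror (lt_trans zw ww')).
by interlacing_lra.
Qed.

Lemma middle_point_outside_absurd : False.
Proof.
apply: (@no_open_cut _ (g @` [set u | u < x]) (g @` [set w | z < w])).
- by exists (g (x - 1)), (x - 1) => //=; lra.
- by exists (g (z + 1)), (z + 1) => //=; lra.
- by move=> _ _ [u ux <-] [w zw <-]; exact: left_lt_right.
- move=> _ _ v [u ux <-] [w zw <-] uv vw.
  have := outer_inside u (or_introl ux); have := outer_inside w (or_intror zw).
  have [hvx|xhv] := ltP (h v) x; first by left; exists (h v); rewrite ?hK.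
  have [zhv|hvz] := ltP z (h v); first by right; exists (h v); rewrite ?hK.
  by have := inner_outside _ xhv hvz; rewrite hK; lra.
- move=> _ [u /= ux <-]; exists (g (u - 1)); first by exists (u - 1) => //=; lra.
  by apply: left_decreasing; lra.
- move=> _ [w /= zw <-]; exists (g (w + 1)); first by exists (w + 1) => //=; lra.
  by apply: right_decreasing; lra.
Qed.

End middle_point_outside.

Lemma increasing_image_between x y z : x < y -> y < z -> g x < g z ->
  g x < g y /\ g y < g z.
Proof.
move=> xy yz gxz; apply: contrapT => not_between.
have /eqP gyx : g y != g x by rewrite (can_eq gK) gt_eqF.
have /eqP gyz : g y != g z by rewrite (can_eq gK) lt_eqF.
by apply: (middle_point_outside_absurd _ _ _ xy yz gxz); lra.
Qed.

End interlacing_preserving_bijection.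

Lemma interlacing_preserving_between {R : realType} {g h : R -> R} :
  cancel g h -> cancel h g -> interlacing_preserving g ->
  forall x y z, x < y -> y < z -> strictly_between (g x) (g z) (g y).
Proof.
move=> gK hK gi x y z xy yz.
have /eqP gxz : g x != g z by rewrite (can_eq gK) lt_eqF // (lt_trans xy yz).
have [lt_gxz|lt_gzx] : g x < g z \/ g z < g x by lra.
  by left; exact: (increasing_image_between gK hK gi _ _ _ xy yz).
have NgK : cancel (- g) (h \o -%R) by move=> t; rewrite /= fctE opprK gK.
have NhK : cancel (h \o -%R) (- g) by move=> t; rewrite /= fctE hK opprK.
have := increasing_image_between NgK NhK (interlacing_preservingN gi) _ _ _ xy yz.
by rewrite !fctE /strictly_between; lra.
Qed.

Lemma between_preserving_monotone {R : realType} (g : R -> R) :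
  (forall x y z, x < y -> y < z -> strictly_between (g x) (g z) (g y)) ->
  {homo g : x y / x < y} \/ {homo g : x y /~ x < y}.
Proof.
move=> gb.
have lt_shiftr a b c : a < b -> b < c -> (g a < g b) = (g a < g c).
  move=> ab bc; have := gb _ _ _ ab bc; rewrite /strictly_between => btw.
  by apply/idP/idP; lra.
have lt_shiftl a b c : a < b -> b < c -> (g b < g c) = (g a < g c).
  move=> ab bc; have := gb _ _ _ ab bc; rewrite /strictly_between => btw.
  by apply/idP/idP; lra.
have lt_same x y x' y' : x < y -> x' < y' -> (g x < g y) = (g x' < g y').
  move=> xy x'y'; pose M := Num.max y y' + 1.
  have yM : y < M by rewrite /M ltr_pwDr // le_max lexx.
  have y'M : y' < M by rewrite /M ltr_pwDr // le_max lexx orbT.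
  rewrite (lt_shiftr _ _ _ xy yM) (lt_shiftr _ _ _ x'y' y'M).
  have [xx'|x'x|->] := ltgtP x x'.
  - by rewrite (lt_shiftl _ _ _ xx' (lt_trans x'y' y'M)).
  - by rewrite (lt_shiftl _ _ _ x'x (lt_trans xy yM)).
  - by [].
have g_neq x y : x < y -> g x < g y \/ g y < g x.
  move=> xy; have := gb x ((x + y) / 2) y; rewrite /strictly_between; lra.
have [g01|g10] := g_neq 0 1 ltr01.
- by left => x y xy; rewrite (lt_same x y 0 1 xy ltr01).
- right => x y yx; case: (g_neq _ _ yx) => [gyx|//].
  by have := lt_same y x 0 1 yx ltr01; rewrite gyx => /esym; lra.
Qed.

Lemma increasing_surjective_continuous {R : realType} {g h : R -> R} :
  cancel h g -> {homo g : x y / x < y} -> continuous g.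
Proof.
move=> hK g_incr x; have gle : {mono g : x y / x <= y} := le_mono g_incr.
have x_in : x \in `]x - 1, x + 1[ by rewrite in_itv /=; apply/andP; split; lra.
apply: (within_continuous_continuous _ _ x_in); first lra.
apply: segment_inc_surj_continuous => [a b _ _|v]; first exact: gle.
rewrite /= !in_itv /= => /andP[v1 v2]; exists (h v); last by rewrite hK.
by rewrite in_itv /= -[x - 1 <= _]gle -[_ <= x + 1]gle hK v1 v2.
Qed.

Lemma monotone_surjective_continuous {R : realType} {g h : R -> R} :
  cancel h g -> {homo g : x y / x < y} \/ {homo g : x y /~ x < y} ->
  continuous g.
Proof.
move=> hK [g_incr|g_decr].
  exact: increasing_surjective_continuous hK g_incr.
have NhK : cancel (h \o -%R) (- g) by move=> t; rewrite /= fctE hK opprK.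
have cNg : continuous (- g).
  apply: (increasing_surjective_continuous NhK) => x y xy.
  by rewrite !fctE ltrN2 g_decr.
by move=> x; rewrite -[g]opprK; exact/continuous_comp/opp_continuous/cNg.
Qed.

Lemma interlacing_preserving_continuous {R : realType} {g h : R -> R} :
  cancel g h -> cancel h g -> interlacing_preserving g -> continuous g.
Proof.
move=> gK hK gi; apply: (monotone_surjective_continuous hK).
exact/between_preserving_monotone/(interlacing_preserving_between gK hK gi).
Qed.

Section dirac_pair.
Context {R : realType} (a b : R).

Definition dirac_pair := measure_add (mscale (2^-1)%:nng (@dirac _ R a R))
                                     (mscale (2^-1)%:nng (@dirac _ R b R)).

HB.instance Definition _ := Measure.on dirac_pair.

Lemma dirac_pairE A : dirac_pair A = (2^-1 * ((a \in A)%:R + (b \in A)%:R))%:E.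
Proof.
rewrite /dirac_pair measure_addE /mscale /= /mscale /= !diracE.
by rewrite -!EFinM -EFinD mulrDr.
Qed.

Let dirac_pair_setT : dirac_pair setT = 1%E.
Proof. by rewrite dirac_pairE !in_setT /=; congr EFin; field. Qed.

HB.instance Definition _ :=
  Measure_isProbability.Build _ _ _ dirac_pair dirac_pair_setT.

Lemma dirac_pair1l : a != b -> dirac_pair [set a] = (2^-1)%:E.
Proof.
by move=> ab; rewrite dirac_pairE !in_set1 eq_sym (negbTE ab) eqxx addr0 mulr1.
Qed.

Lemma dirac_pair1r : a != b -> dirac_pair [set b] = (2^-1)%:E.
Proof.
by move=> ab; rewrite dirac_pairE !in_set1 (negbTE ab) eqxx add0r mulr1.
Qed.

End dirac_pair.

Lemma probability_half_atoms {R : realType} (P : probability R R) (p q : R)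
    (A : set R) :
  p != q -> P [set p] = (2^-1)%:E -> P [set q] = (2^-1)%:E -> measurable A ->
  P A = dirac_pair p q A.
Proof.
move=> pq Pp Pq mA; set S := [set p] `|` [set q].
have mS : measurable S by exact: measurableU.
have disj : [set p] `&` [set q] = set0.
  by rewrite set1I in_set1 (negbTE pq).
have PS : P S = 1%E by rewrite /S measureU //= Pp Pq -EFinD; congr EFin; field.
have PSC : P (~` S) = 0%E by rewrite probability_setC // PS subee.
have PAS : P (A `\` S) = 0%E.
  by apply: (subset_measure0 (measurableD mA mS) (measurableC mS) _ PSC) => x [].
rewrite (measureDI P mA mS) /= PAS add0e dirac_pairE /S setIUr !setI1.
case: (p \in A); case: (q \in A) => /=.
- by rewrite measureU //= Pp Pq -EFinD; congr EFin; field.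
- by rewrite setU0 /= Pp; congr EFin; field.
- by rewrite set0U /= Pq; congr EFin; field.
- by rewrite setU0 measure0 addr0 mulr0.
Qed.

Lemma kuiperC {R : realType} (P Q : probability R R) : kuiper P Q = kuiper Q P.
Proof.
rewrite /kuiper; congr ereal_sup; apply: eq_imagel => _ [i [-> _]].
by rewrite -abseN fin_num_oppeB ?fin_num_measure // addeC.
Qed.

Section kuiper_dirac_pairs.
Context {R : realType} {P Q : probability R R} {a b c d : R}.
Hypothesis abcd : uniq [:: a; b; c; d].
Hypothesis PE : forall A, measurable A -> P A = dirac_pair a b A.
Hypothesis QE : forall A, measurable A -> Q A = dirac_pair c d A.

Let kuiper_itvE (i : interval R) : (P [set` i] - Q [set` i])%E =
  (2^-1 * ((a \in i)%:R + (b \in i)%:R) - 2^-1 * ((c \in i)%:R + (d \in i)%:R))%:E.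
Proof. by rewrite PE ?QE ?dirac_pairE ?measurable_itv // !mem_setE. Qed.

Let itv_le_kuiper (i : interval R) x y : x \in i -> y \in i -> x < y ->
  (`|P [set` i] - Q [set` i]| <= kuiper P Q)%E.
Proof.
move=> xi yi xy; apply: ereal_sup_ubound; exists [set` i] => //.
by exists i; split => //; exists x, y.
Qed.

Let one_le_kuiper_itv x y : x < y -> a \in `[x, y] -> b \in `[x, y] ->
  c \notin `[x, y] -> d \notin `[x, y] -> (1 <= kuiper P Q)%E.
Proof.
move=> xy ai bi /negbTE ci /negbTE di.
have [xi yi] : x \in `[x, y] /\ y \in `[x, y] by rewrite !bound_itvE ltW.
apply: le_trans (itv_le_kuiper _ _ _ xi yi xy).
rewrite kuiper_itvE ai bi ci di abse_EFin lee_fin /= ler_normr.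
by apply/orP; left; lra.
Qed.

Lemma one_le_kuiper : ~ strictly_between a b c -> ~ strictly_between a b d ->
  (1 <= kuiper P Q)%E.
Proof.
move: abcd; rewrite /= !inE !negb_or => /and3P[/and3P[/eqP ab /eqP ac /eqP ad]].
move=> /andP[/eqP bc /eqP bd] _; rewrite /strictly_between => nc nd.
have [xy|xy] : a < b \/ b < a by lra.
all: apply: (one_le_kuiper_itv _ _ xy); rewrite in_itv /=.
all: first [by apply/andP; split; lra | by apply/negP => /andP[]; lra].
Qed.

Lemma kuiper_le_half : interlaced a b c d -> (kuiper P Q <= (2^-1)%:E)%E.
Proof.
move=> il; apply: ge_ereal_sup => _ [_ [i [-> _]] <-].
have ab_in : a \in i -> b \in i -> (c \in i) || (d \in i).
  move=> ai bi; case: il => [[]] /(strictly_between_in_itv ai bi) -> _ //.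
  by rewrite orbT.
have cd_in : c \in i -> d \in i -> (a \in i) || (b \in i).
  move=> ci di; case: il => _ [] /(strictly_between_in_itv ci di) -> //.
  by rewrite orbT.
rewrite kuiper_itvE abse_EFin lee_fin.
move: ab_in cd_in; case: (a \in i); case: (b \in i); case: (c \in i);
  case: (d \in i) => /= ab_in cd_in; rewrite ?ler_norml; try (apply/andP; split; lra).
all: by [case: (ab_in isT isT) | case: (cd_in isT isT)].
Qed.

End kuiper_dirac_pairs.

Lemma one_le_kuiper_dirac_pairs {R : realType} {P Q : probability R R}
    {a b c d : R} :
  uniq [:: a; b; c; d] ->
  (forall A, measurable A -> P A = dirac_pair a b A) ->
  (forall A, measurable A -> Q A = dirac_pair c d A) ->
  (1 <= kuiper P Q)%E <-> ~ interlaced a b c d.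
Proof.
move=> abcd PE QE; split.
  move=> le1 /(kuiper_le_half PE QE) /(le_trans le1).
  by rewrite lee_fin; lra.
rewrite /interlaced => /not_andP[/not_orP[nc nd]|/not_orP[na nb]].
  exact: one_le_kuiper abcd PE QE nc nd.
rewrite kuiperC; apply: one_le_kuiper QE PE na nb.
by rewrite -(rot_uniq 2).
Qed.

Lemma kuiper_isometry_interlacing {R : realType}
    {phi : probability R R -> probability R R} {f : R -> R} :
  (forall mu nu, kuiper (phi mu) (phi nu) = kuiper mu nu) -> injective f ->
  (forall mu x, phi mu [set f x] = mu [set x]) -> interlacing_preserving f.
Proof.
move=> phi_iso f_inj phi_atom a b c d.
have uniq_f : uniq [:: f a; f b; f c; f d] = uniq [:: a; b; c; d].
  exact: (map_inj_uniq f_inj [:: a; b; c; d]).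
have [abcd|not_abcd] := boolP (uniq [:: a; b; c; d]); last first.
  by split=> /interlaced_uniq; rewrite ?uniq_f (negbTE not_abcd).
have fabcd : uniq [:: f a; f b; f c; f d] by rewrite uniq_f.
have phiE x y : x != y -> forall A, measurable A ->
    phi (dirac_pair x y) A = dirac_pair (f x) (f y) A.
  move=> xy A mA; apply: probability_half_atoms => //.
  - by rewrite (inj_eq f_inj).
  - by rewrite phi_atom; exact: dirac_pair1l.
  - by rewrite phi_atom; exact: dirac_pair1r.
move: (abcd) (fabcd); rewrite /= !inE !negb_or.
move=> /and3P[/and3P[ab _ _] _ /andP[cd _]] _.
rewrite -[interlaced a b c d]notK -[interlaced (f a) _ _ _]notK.
rewrite -(one_le_kuiper_dirac_pairs (P := dirac_pair a b) (Q := dirac_pair c d)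
            abcd) //.
by rewrite -(one_le_kuiper_dirac_pairs fabcd (phiE _ _ ab) (phiE _ _ cd)) phi_iso.
Qed.

Theorem lemma3p4 (R : realType) (phi : probability R R -> probability R R)
  (f : R -> R) :
  (forall nu : probability R R, exists mu : probability R R, phi mu = nu) ->
  (forall mu nu : probability R R, kuiper (phi mu) (phi nu) = kuiper mu nu) ->
  bijective f ->
  (forall (mu : probability R R) (x : R), phi mu [set f x] = mu [set x]) ->
  continuous f /\ exists g : R -> R, [/\ cancel f g, cancel g f & continuous g].
Proof.
move=> _ phi_iso [g fK gK] phi_atom.
have f_il := kuiper_isometry_interlacing phi_iso (can_inj fK) phi_atom.
split; first exact: interlacing_preserving_continuous fK gK f_il.
exists g; split => //.
exact: interlacing_preserving_continuous gK fK (interlacing_preserving_can gK f_il).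
Qed.
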